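(* Let $\Sigma$ be a finite set of tokens, $c$ a context, $M_1,M_2$ language models, $f$ a min-bounded function with constant $\lambda_f$, $M=DAGG_f(M_1,M_2)$, and $t\in\Sigma$ a token. Then $t$ is $\le\gamma$-exposed by $M$ over $M_1$ at $c$ and $\le\gamma$-exposed by $M$ over $M_2$ at $c$, where $$\gamma=\lambda_f\,\overline{f_c}(M_1,M_2)\le\lambda_f\sqrt{MAE_c(M_1,M_2)}.$$
   Context: Let $n=|\Sigma|$. A context is a finite sequence of tokens from $\Sigma$. A language model $M$ assigns to every context $c$ and token $t\in\Sigma$ a probability $p_M(t\mid c)>0$, with $\sum_{t\in\Sigma}p_M(t\mid c)=1$. For $g:\Sigma\to\mathbb{R}_{>0}$, $GM(g(t)):=\exp\big(\tfrac1n\sum_{t\in\Sigma}\log g(t)\big)$. Typical probability: $tp_c(M):=GM(p_M(t\mid c))$; relative probability: $rp_M(t\mid c):=p_M(t\mid c)/tp_c(M)$. Typical probability ratio: $tpr_c(M_1,M_2):=GM\big(\tfrac{p_{M_1}(t\mid c)}{p_{M_2}(t\mid c)}\big)$. A token $t$ is $\alpha$-exposed by $M_1$ over $M_2$ at $c$ if $\frac{p_{M_1}(t\mid c)}{p_{M_2}(t\mid c)\cdot tpr_c(M_1,M_2)}=\alpha$; it is $\le\alpha$-exposed if it is $\beta$-exposed for some $\beta\le\alpha$. A function $f:\mathbb{R}_{>0}^2\to\mathbb{R}_{>0}$ is proper-avg if $\min(x,y)\le f(x,y)\le\max(x,y)$ for all $x,y>0$; it is min-bounded if it is proper-avg and there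 is a constant $\lambda_f$ with $f(x,y)\le\lambda_f\min(x,y)$ for all $x,y>0$. Set $M(t\mid c):=f(rp_{M_1}(t\mid c),rp_{M_2}(t\mid c))$; $DAGG_f(M_1,M_2)$ is the language model $M$ with $p_M(t\mid c):=\frac{M(t\mid c)}{\sum_{t'\in\Sigma}M(t'\mid c)}$. Define $\overline{f_c}(M_1,M_2):=GM\big(M(t\mid c)^{-1}\big)$ and $MAE_c(M_1,M_2):=GM\Big(\max\Big(\tfrac{rp_{M_1}(t\mid c)}{rp_{M_2}(t\mid c)},\tfrac{rp_{M_2}(t\mid c)}{rp_{M_1}(t\mid c)}\Big)\Big)$. *)

From HB Require Import structures.
From mathcomp Require Import all_boot all_order all_algebra.
From mathcomp Require Import all_classical all_reals all_analysis.
Set Implicit Arguments. Unset Strict Implicit. Unset Printing Implicit Defensive.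
Import Order.TTheory GRing.Theory Num.Theory.
Local Open Scope ring_scope.

Section Defs.
Variables (R : realType) (T : finType).
(* tokens: the finite type T (Sigma); contexts: seq T;
   a language model is represented by its probability function p c t. *)
Definition model := seq T -> T -> R.

Definition is_LM (p : model) : Prop :=
  (forall c t, 0 < p c t) /\ (forall c, \sum_(t : T) p c t = 1).

Definition GM (g : T -> R) : R := expR ((#|T|%:R)^-1 * \sum_(t : T) ln (g t)).

Definition tp (p : model) (c : seq T) : R := GM (fun t => p c t).
Definition rp (p : model) (c : seq T) (t : T) : R := p c t / tp p c.
Definition tpr (p1 p2 : model) (c : seq T) : R := GM (fun t => p1 c t / p2 c t).

Definition exposed (p1 p2 : model) (c : seq T) (t : T) (a : R) : Prop :=
  p1 c t / (p2 c t * tpr p1 p2 c) = a.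
Definition le_exposed (p1 p2 : model) (c : seq T) (t : T) (a : R) : Prop :=
  exists b, b <= a /\ exposed p1 p2 c t b.

Definition proper_avg (f : R -> R -> R) : Prop :=
  forall x y, 0 < x -> 0 < y -> Num.min x y <= f x y <= Num.max x y.
Definition min_bounded_with (f : R -> R -> R) (lam : R) : Prop :=
  proper_avg f /\ forall x y, 0 < x -> 0 < y -> f x y <= lam * Num.min x y.

Definition Mval (f : R -> R -> R) (p1 p2 : model) (c : seq T) (t : T) : R :=
  f (rp p1 c t) (rp p2 c t).
Definition DAGG (f : R -> R -> R) (p1 p2 : model) : model :=
  fun c t => Mval f p1 p2 c t / \sum_(t' : T) Mval f p1 p2 c t'.
Definition fbar (f : R -> R -> R) (p1 p2 : model) (c : seq T) : R :=
  GM (fun t => (Mval f p1 p2 c t)^-1).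
Definition MAE (p1 p2 : model) (c : seq T) : R :=
  GM (fun t => Num.max (rp p1 c t / rp p2 c t) (rp p2 c t / rp p1 c t)).
End Defs.

From mathcomp Require Import all_boot all_order all_algebra.
From mathcomp Require Import all_classical all_reals all_analysis.
From mathcomp Require Import ring.
Set Implicit Arguments. Unset Strict Implicit. Unset Printing Implicit Defensive.
Import Order.TTheory GRing.Theory Num.Theory.
Local Open Scope ring_scope.

(* The geometric mean GM is multiplicative, so the relative probabilities rp
   of every model have geometric mean 1, normalisation constants cancel out of
   rp, and the exposure ratio of M over M_i is rp_M(t) / rp_{M_i}(t), where
   rp_M(t) = M(t) * fbar. Min-boundedness gives M(t) <= lam * rp_{M_i}(t),
   hence the bound lam * fbar. Finally M(t) >= min(rp_1, rp_2) =: m(t), and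
   max(a/b, b/a) = ab / min(a,b)^2 together with GM(rp_1) = GM(rp_2) = 1 gives
   MAE = GM(1/m)^2 >= fbar^2. *)

Section GeometricMean.
Variables (R : realType) (T : finType).
Implicit Types (g h : T -> R) (k : R).

Lemma GM_gt0 g : 0 < GM g.
Proof. exact: expR_gt0. Qed.

Lemma GMM g h : (forall t, 0 < g t) -> (forall t, 0 < h t) ->
  GM (fun t => g t * h t) = GM g * GM h.
Proof.
move=> g_gt0 h_gt0; rewrite /GM -expRD -mulrDr -big_split /=.
by congr (expR (_ * _)); apply: eq_bigr => t _; rewrite lnM ?posrE.
Qed.

Lemma GMV g : (forall t, 0 < g t) -> GM (fun t => (g t)^-1) = (GM g)^-1.
Proof.
move=> g_gt0; rewrite /GM -expRN -mulrN -sumrN.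
by congr (expR (_ * _)); apply: eq_bigr => t _; rewrite lnV ?posrE.
Qed.

Lemma GM_cst (t0 : T) k : 0 < k -> GM (fun _ : T => k) = k.
Proof.
move=> k_gt0; have cardT_neq0 : #|T|%:R != 0 :> R.
  by rewrite pnatr_eq0 -lt0n; apply/card_gt0P; exists t0.
by rewrite /GM sumr_const -[ln k *+ _]mulr_natr mulrCA mulVf // mulr1 lnK ?posrE.
Qed.

Lemma GM_divr (t0 : T) g k : (forall t, 0 < g t) -> 0 < k ->
  GM (fun t => g t / k) = GM g / k.
Proof.
by move=> g_gt0 k_gt0; rewrite (GMM g_gt0) ?(GM_cst t0) ?invr_gt0.
Qed.

Lemma ler_GM g h : (forall t, 0 < g t) -> (forall t, g t <= h t) ->
  GM g <= GM h.
Proof.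
move=> g_gt0 le_gh; rewrite /GM ler_expR ler_wpM2l ?invr_ge0 ?ler0n //.
apply: ler_sum => t _; rewrite ler_ln ?posrE //.
exact: lt_le_trans (g_gt0 t) (le_gh t).
Qed.

End GeometricMean.

Section RelativeProbability.
Variables (R : realType) (T : finType) (c : seq T).
Implicit Types (p q : model R T).

Lemma rp_gt0 p t : (forall t, 0 < p c t) -> 0 < rp p c t.
Proof. by move=> p_gt0; rewrite divr_gt0 ?GM_gt0. Qed.

Lemma GM_rp (t0 : T) p : (forall t, 0 < p c t) -> GM (rp p c) = 1.
Proof. by move=> p_gt0; rewrite (GM_divr t0) ?GM_gt0 ?divff ?gt_eqF ?GM_gt0. Qed.

Lemma tpr_tp p q : (forall t, 0 < p c t) -> (forall t, 0 < q c t) ->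
  tpr p q c = tp p c / tp q c.
Proof.
move=> p_gt0 q_gt0; rewrite /tpr (GMM p_gt0) ?GMV //.
by move=> t; rewrite invr_gt0.
Qed.

Lemma exposure_rp p q t : (forall t, 0 < p c t) -> (forall t, 0 < q c t) ->
  p c t / (q c t * tpr p q c) = rp p c t / rp q c t.
Proof.
move=> p_gt0 q_gt0; rewrite tpr_tp // /rp.
by field; rewrite !gt_eqF ?GM_gt0.
Qed.

Lemma le_exposed_ratio p q t a :
  p c t / (q c t * tpr p q c) <= a -> le_exposed p q c t a.
Proof. by move=> le_a; exists (p c t / (q c t * tpr p q c)). Qed.

End RelativeProbability.

Lemma maxr_div_sym (R : realFieldType) (a b : R) : 0 < a -> 0 < b ->
  Num.max (a / b) (b / a) = a * b / Num.min a b ^+ 2.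
Proof.
wlog le_ab : a b / a <= b => [hwlog a_gt0 b_gt0|a_gt0 b_gt0].
  have /orP[/hwlog->//|/hwlog/(_ b_gt0 a_gt0)] := le_total a b.
  by rewrite maxC minC [b * a]mulrC.
have le_div : a / b <= b / a.
  by rewrite ler_pdivrMr // mulrAC ler_pdivlMr // -!expr2 ler_pXn2r // nnegrE ltW.
by rewrite (max_idPr le_div) (min_idPl le_ab); field; rewrite gt_eqF.
Qed.

Lemma min_bounded_ge1 (R : realType) (f : R -> R -> R) lam :
  min_bounded_with f lam -> 1 <= lam.
Proof.
case=> avg le_lam; have /andP[+ _] := avg 1 1 ltr01 ltr01.
by rewrite minxx => /le_trans/(_ (le_lam 1 1 ltr01 ltr01)); rewrite minxx mulr1.
Qed.

Section Aggregation.
Variables (R : realType) (T : finType) (p1 p2 : model R T) (f : R -> R -> R).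
Variables (c : seq T) (t0 : T).
Hypotheses (p1_gt0 : forall t, 0 < p1 c t) (p2_gt0 : forall t, 0 < p2 c t).
Hypothesis f_avg : proper_avg f.

Local Notation M := (Mval f p1 p2 c).
Local Notation m t := (Num.min (rp p1 c t) (rp p2 c t)).

Lemma min_rp_gt0 t : 0 < m t.
Proof. by rewrite lt_min !rp_gt0. Qed.

Lemma Mval_ge_min t : m t <= M t.
Proof. by have /andP[] := f_avg (rp_gt0 t p1_gt0) (rp_gt0 t p2_gt0). Qed.

Lemma Mval_gt0 t : 0 < M t.
Proof. exact: lt_le_trans (min_rp_gt0 t) (Mval_ge_min t). Qed.

Lemma sum_Mval_gt0 : 0 < \sum_s M s.
Proof.
rewrite (bigD1 t0) //= ltr_wpDr ?Mval_gt0 // sumr_ge0 // => s _.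
exact/ltW/Mval_gt0.
Qed.

Lemma DAGG_gt0 t : 0 < DAGG f p1 p2 c t.
Proof. by rewrite divr_gt0 ?Mval_gt0 ?sum_Mval_gt0. Qed.

Lemma fbarE : fbar f p1 p2 c = (GM M)^-1.
Proof. exact/GMV/Mval_gt0. Qed.

Lemma rp_DAGG t : rp (DAGG f p1 p2) c t = M t * fbar f p1 p2 c.
Proof.
rewrite /rp /tp /DAGG (GM_divr t0 Mval_gt0 sum_Mval_gt0) fbarE.
by field; rewrite !gt_eqF ?GM_gt0 ?sum_Mval_gt0.
Qed.

Lemma le_exposed_DAGG (p : model R T) lam t : (forall s, 0 < p c s) ->
  M t <= lam * rp p c t -> le_exposed (DAGG f p1 p2) p c t (lam * fbar f p1 p2 c).
Proof.
move=> p_gt0 le_M; apply: le_exposed_ratio.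
have fbar_ge0 : 0 <= fbar f p1 p2 c by rewrite fbarE invr_ge0 ltW ?GM_gt0.
rewrite (exposure_rp t DAGG_gt0 p_gt0) rp_DAGG mulrAC ler_wpM2r //.
by rewrite ler_pdivrMr ?rp_gt0.
Qed.

Lemma MAE_sqr : MAE p1 p2 c = GM (fun t => (m t)^-1) ^+ 2.
Proof.
have mV_gt0 t : 0 < (m t)^-1 by rewrite invr_gt0 min_rp_gt0.
have mV2_gt0 t : 0 < (m t)^-1 * (m t)^-1 by rewrite mulr_gt0.
have rp1_gt0 t : 0 < rp p1 c t by exact: rp_gt0.
have rp2_gt0 t : 0 < rp p2 c t by exact: rp_gt0.
have rp12_gt0 t : 0 < rp p1 c t * rp p2 c t by rewrite mulr_gt0.
rewrite /MAE (eq_fun (fun t => maxr_div_sym (rp1_gt0 t) (rp2_gt0 t))).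
under eq_fun => t do rewrite mulrC expr2 invfM.
rewrite (GMM mV2_gt0 rp12_gt0) (GMM mV_gt0 mV_gt0) (GMM rp1_gt0 rp2_gt0).
by rewrite !(GM_rp t0) // !mulr1 -expr2.
Qed.

Lemma fbar_le_sqrt_MAE : fbar f p1 p2 c <= Num.sqrt (MAE p1 p2 c).
Proof.
have GM_mV_ge0 : 0 <= GM (fun t => (m t)^-1) by exact/ltW/GM_gt0.
rewrite MAE_sqr sqrtr_sqr (ger0_norm GM_mV_ge0) fbarE -(GMV Mval_gt0).
apply: ler_GM => t; first by rewrite invr_gt0 Mval_gt0.
by rewrite lef_pV2 ?posrE ?Mval_gt0 ?min_rp_gt0 ?Mval_ge_min.
Qed.

End Aggregation.

Theorem theorem2 (R : realType) (T : finType) (p1 p2 : model R T)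
  (f : R -> R -> R) (lam : R) (c : seq T) (t : T) :
  is_LM p1 -> is_LM p2 -> min_bounded_with f lam ->
  let gamma := lam * fbar f p1 p2 c in
  [/\ le_exposed (DAGG f p1 p2) p1 c t gamma,
      le_exposed (DAGG f p1 p2) p2 c t gamma &
      gamma <= lam * Num.sqrt (MAE p1 p2 c)].
Proof.
move=> [p1_gt0 _] [p2_gt0 _] f_mb gamma; have [f_avg le_lam] := f_mb.
have le_M_lam_rp : Mval f p1 p2 c t <= lam * Num.min (rp p1 c t) (rp p2 c t).
  exact: le_lam (rp_gt0 t (p1_gt0 c)) (rp_gt0 t (p2_gt0 c)).
have lam_ge0 : 0 <= lam by exact: le_trans ler01 (min_bounded_ge1 f_mb).
split.
- apply: (le_exposed_DAGG t) => //; apply: le_trans le_M_lam_rp _.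
  by rewrite ler_wpM2l // ge_min lexx.
- apply: (le_exposed_DAGG t) => //; apply: le_trans le_M_lam_rp _.
  by rewrite ler_wpM2l // ge_min lexx orbT.
- by rewrite ler_wpM2l // (fbar_le_sqrt_MAE t).
Qed.
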